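(* Let $\mathds{k}$ be an algebraically closed field of characteristic $p>0$, $G$ a finite group, $\omega$ a 3-cocycle on $G$ with values in $\mathds{k}^\times$, $H\subseteq G$ a subgroup and $\phi:H\times H\to\mathds{k}^\times$ a 2-cochain with $d\phi=\omega|_H^{-1}$. Then the finite semisimple right $\mathbf{Vect}^\omega_G$-module category $\mathcal{M}(H,\phi)$ is separable if and only if $H$ has no $p$-torsion.
   Context: $\mathbf{Vect}^{\omega}_G$ is the fusion category of finite-dimensional $G$-graded $\mathds{k}$-vector spaces with simple objects $\mathds{k}_g$, $\mathds{k}_g\otimes\mathds{k}_h=\mathds{k}_{gh}$, and associator $(\mathds{k}_g\otimes \mathds{k}_h)\otimes \mathds{k}_m\rightarrow \mathds{k}_g\otimes (\mathds{k}_h\otimes \mathds{k}_m)$ given by $\omega(g,h,m)$. For a 2-cochain $\kappa$, $(d\kappa)(a,b,c)=\kappa(b,c)\kappa(ab,c)^{-1}\kappa(a,bc)\kappa(a,b)^{-1}$. $R(H,\phi)$ is the algebra in $\mathbf{Vect}^\omega_G$ given by the twisted group algebra $\mathds{k}^\phi[H]$ (object $\bigoplus_{h\in H}\mathds{k}_h$, product $h_1\cdot h_2=\phi(h_1,h_2)h_1h_2$), and $\mathcal{M}(H,\phi)$ is the right $\mathbf{Vect}^\omega_G$-module category of left $R(H,\phi)$-modules in $\mathbf{Vect}^\omega_G$. A finite semisimple right module category $\mathcal{M}$ over a fusion category $\mathcal{C}$ is separable if $\mathcal{M}\simeq Mod_{\mathcal{C}}(R)$ for a separable algebra $R$ in $\mathcal{C}$,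 i.e. one whose multiplication $R\otimes R\to R$ admits a section as a map of $R$-$R$-bimodules (this does not depend on the choice of $R$). *)

From HB Require Import structures.
From mathcomp Require Import all_boot all_order all_algebra all_fingroup all_solvable.
Set Implicit Arguments. Unset Strict Implicit. Unset Printing Implicit Defensive.
Import GRing.Theory.
Local Open Scope ring_scope.

(* A function om : G -> G -> G -> F models the associator of Vect^om_G:
   (k_g (x) k_h) (x) k_m -> k_g (x) (k_h (x) k_m) is multiplication by om g h m. *)

Section Defs.
Variables (F : fieldType) (G : finGroupType).

Definition is_3cocycle (om : G -> G -> G -> F) : Prop :=
  (forall a b c, om a b c != 0) /\
  (forall g1 g2 g3 g4,
     om g2 g3 g4 * om g1 (g2 * g3)%g g4 * om g1 g2 g3
     = om (g1 * g2)%g g3 g4 * om g1 g2 (g3 * g4)%g).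

Definition cobound2 (k : G -> G -> F) (a b c : G) : F :=
  k b c * (k (a * b)%g c)^-1 * k a (b * c)%g * (k a b)^-1.

Definition is_twist (H : {group G}) (om : G -> G -> G -> F) (phi : G -> G -> F)
  : Prop :=
  (forall a b, a \in H -> b \in H -> phi a b != 0) /\
  (forall a b c, a \in H -> b \in H -> c \in H ->
     cobound2 phi a b c = (om a b c)^-1).

(* The algebra R(H,phi) = k^phi[H] in Vect^om_G has basis {h : h in H}, h of
   degree h, product h1.h2 = phi(h1,h2) h1h2.  R (x) R has basis
   e_{a,b} (a,b in H) of degree ab.  A linear map s : R -> R (x) R is encoded
   by its coefficients: s(x) = sum_{a,b in H} sec x a b e_{a,b}.

   - s is a morphism of Vect^om_G iff it preserves the G-grading.
   - multiplication m : R (x) R -> R, e_{a,b} |-> phi(a,b) ab.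
   - left R-action on R (x) R: (m (x) id) o assoc^-1, i.e.
       h . e_{a,b} = om(h,a,b)^-1 phi(h,a) e_{ha,b};
     right R-action: (id (x) m) o assoc, i.e.
       e_{a,b} . h = om(a,b,h) phi(b,h) e_{a,bh};
     the actions of R on R are given by m.
   R(H,phi) is separable iff m admits a section that is a map of R-R-bimodules. *)

Definition sec_graded (H : {group G}) (sec : G -> G -> G -> F) : Prop :=
  forall x a b, x \in H -> a \in H -> b \in H -> (a * b)%g != x -> sec x a b = 0.

Definition sec_is_section (H : {group G}) (phi : G -> G -> F)
  (sec : G -> G -> G -> F) : Prop :=
  forall x y, x \in H -> y \in H ->
    \sum_(a in H) \sum_(b in H | (a * b)%g == y) sec x a b * phi a b
    = (x == y)%:R.

Definition sec_left_linear (H : {group G}) (om : G -> G -> G -> F)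
  (phi : G -> G -> F) (sec : G -> G -> G -> F) : Prop :=
  forall h x a' b', h \in H -> x \in H -> a' \in H -> b' \in H ->
    phi h x * sec (h * x)%g a' b'
    = \sum_(a in H) \sum_(b in H | ((h * a)%g == a') && (b == b'))
        sec x a b * ((om h a b)^-1 * phi h a).

Definition sec_right_linear (H : {group G}) (om : G -> G -> G -> F)
  (phi : G -> G -> F) (sec : G -> G -> G -> F) : Prop :=
  forall x h a' b', x \in H -> h \in H -> a' \in H -> b' \in H ->
    phi x h * sec (x * h)%g a' b'
    = \sum_(a in H) \sum_(b in H | (a == a') && ((b * h)%g == b'))
        sec x a b * (om a b h * phi b h).

Definition twisted_group_alg_separable (H : {group G})
  (om : G -> G -> G -> F) (phi : G -> G -> F) : Prop :=
  exists sec : G -> G -> G -> F,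
    [/\ sec_graded H sec, sec_is_section H phi sec,
        sec_left_linear H om phi sec & sec_right_linear H om phi sec].

(* M(H,phi) = Mod(R(H,phi)) is separable; since separability of a module
   category does not depend on the choice of algebra R with M ~ Mod(R),
   this is separability of R(H,phi). *)
Definition module_cat_separable (H : {group G})
  (om : G -> G -> G -> F) (phi : G -> G -> F) : Prop :=
  twisted_group_alg_separable H om phi.

Definition no_p_torsion (p : nat) (H : {group G}) : Prop :=
  forall x, x \in H -> (p.-elt x)%g -> x = 1%g.

End Defs.

From mathcomp Require Import all_boot all_algebra all_fingroup all_solvable ring.
Set Implicit Arguments. Unset Strict Implicit. Unset Printing Implicit Defensive.
Import GRing.Theory.
Local Open Scope ring_scope.

(* A bimodule section s of the multiplication of k^phi[H] has coefficients
   c(a, b) = s(ab)_{a,b} phi(a, b); left and right linearity make c invariant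
   under left translation of a and right translation of b (the twist absorbs
   the associator), so c is constant on H x H. Then m s = id at the unit reads
   #|H| c = 1, hence #|H| is invertible in k. Conversely, when #|H| is
   invertible, x |-> #|H|^-1 sum_{ab = x} phi(a, b)^-1 e_{a,b} is a bimodule
   section. Finally p does not divide #|H| iff H has no element of order p
   (Cauchy). *)

Section BigPred1.
Variables (R : nmodType) (I : finType) (A : {pred I}).

Lemma big_in_pred1 (P : pred I) i0 (f : I -> R) :
  i0 \in A -> P =1 pred1 i0 -> \sum_(i in A | P i) f i = f i0.
Proof.
move=> Ai0 Pi0; apply: big_pred1 => i /=.
by rewrite Pi0 /=; case: eqP => [->|]; rewrite ?Ai0 ?andbF.
Qed.

Lemma big_in_pred1_2 (P Q : pred I) i0 j0 (f : I -> I -> R) :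
  i0 \in A -> j0 \in A -> P =1 pred1 i0 -> Q =1 pred1 j0 ->
  \sum_(i in A) \sum_(j in A | P i && Q j) f i j = f i0 j0.
Proof.
move=> Ai0 Aj0 Pi0 Qj0; rewrite (bigD1 i0) //= [X in _ + X]big1 ?addr0.
  by apply: big_in_pred1 => // j; rewrite Pi0 /= eqxx Qj0.
move=> i /andP[_ /negbTE ni0]; rewrite big1 // => j /andP[_].
by rewrite Pi0 /= ni0.
Qed.

End BigPred1.

Lemma no_p_torsionP (G : finGroupType) (H : {group G}) p :
  prime p -> no_p_torsion p H <-> ~~ (p %| #|H|)%N.
Proof.
move=> p_pr; split=> [noTor | p'H x Hx p_x].
  apply/negP => /(Cauchy p_pr) [x Hx ox].
  have x1 : x = 1%g by apply: noTor; rewrite // /p_elt ox pnat_id.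
  by move: (prime_gt1 p_pr); rewrite -ox x1 order1.
apply/eqP; rewrite -order_eq1; apply/eqP; apply: pnat_1 p_x _.
by rewrite p'natE //; apply: contra p'H => /dvdn_trans; apply; apply: order_dvdG.
Qed.

Section TwistedGroupAlgebra.
Variables (F : fieldType) (G : finGroupType) (H : {group G}).
Variables (om : G -> G -> G -> F) (phi : G -> G -> F).
Hypothesis om_neq0 : forall a b c, om a b c != 0.
Hypothesis phi_neq0 : forall a b, a \in H -> b \in H -> phi a b != 0.
Hypothesis dphi : forall a b c, a \in H -> b \in H -> c \in H ->
  cobound2 phi a b c = (om a b c)^-1.

Lemma twist_phiMr h a b : h \in H -> a \in H -> b \in H ->
  phi h (a * b)%g = (om h a b)^-1 * phi h a * phi (h * a)%g b / phi a b.
Proof.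
move=> Hh Ha Hb; rewrite -dphi // /cobound2.
have := phi_neq0 Hh Ha; have := phi_neq0 Ha Hb; have := phi_neq0 (groupM Hh Ha) Hb.
by move=> ? ? ?; field; apply/and3P.
Qed.

Lemma twist_phiMl a b h : a \in H -> b \in H -> h \in H ->
  phi (a * b)%g h = om a b h * phi b h * phi a (b * h)%g / phi a b.
Proof.
move=> Ha Hb Hh; rewrite -[om a b h]invrK -dphi // /cobound2.
have := phi_neq0 Ha Hb; have := phi_neq0 (groupM Ha Hb) Hh.
have := phi_neq0 Ha (groupM Hb Hh); have := phi_neq0 Hb Hh.
by move=> ? ? ? ?; field; apply/and4P.
Qed.

Section SectionCoefficients.
Variable sec : G -> G -> G -> F.

Definition sec_coef (a b : G) : F := sec (a * b)%g a b * phi a b.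

Lemma sec_coefMl h a b : sec_left_linear H om phi sec ->
  h \in H -> a \in H -> b \in H -> sec_coef (h * a)%g b = sec_coef a b.
Proof.
move=> secL Hh Ha Hb.
have := secL h (a * b)%g (h * a)%g b Hh (groupM Ha Hb) (groupM Hh Ha) Hb.
rewrite (big_in_pred1_2 (i0 := a) (j0 := b)) //; last first.
  by move=> a'; apply/eqP/eqP => [/mulgI|->].
rewrite twist_phiMr // mulgA => E.
have k_neq0 : (om h a b)^-1 * phi h a != 0.
  by rewrite mulf_neq0 ?invr_eq0 ?om_neq0 ?phi_neq0.
apply: (mulfI k_neq0).
have -> : (om h a b)^-1 * phi h a * sec_coef (h * a) b =
    (om h a b)^-1 * phi h a * phi (h * a)%g b / phi a b
    * sec (h * a * b)%g (h * a)%g b * phi a b.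
  by rewrite /sec_coef; field; rewrite phi_neq0 ?om_neq0.
by rewrite E /sec_coef; ring.
Qed.

Lemma sec_coefMr a b h : sec_right_linear H om phi sec ->
  a \in H -> b \in H -> h \in H -> sec_coef a (b * h)%g = sec_coef a b.
Proof.
move=> secR Ha Hb Hh.
have := secR (a * b)%g h a (b * h)%g (groupM Ha Hb) Hh Ha (groupM Hb Hh).
rewrite (big_in_pred1_2 (i0 := a) (j0 := b)) //; last first.
  by move=> b'; apply/eqP/eqP => [/mulIg|->].
rewrite twist_phiMl // => E.
have k_neq0 : om a b h * phi b h != 0 by rewrite mulf_neq0 ?om_neq0 ?phi_neq0.
apply: (mulfI k_neq0).
have -> : om a b h * phi b h * sec_coef a (b * h) =
    om a b h * phi b h * phi a (b * h)%g / phi a b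
    * sec (a * b * h)%g a (b * h)%g * phi a b.
  by rewrite /sec_coef mulgA; field; rewrite phi_neq0.
by rewrite E /sec_coef; ring.
Qed.

Lemma sec_coef_const a b :
  sec_left_linear H om phi sec -> sec_right_linear H om phi sec ->
  a \in H -> b \in H -> sec_coef a b = sec_coef 1%g 1%g.
Proof.
move=> secL secR Ha Hb.
by rewrite -[a]mulg1 sec_coefMl // -[b]mul1g sec_coefMr.
Qed.

Lemma sum_sec_coef : sec_is_section H phi sec ->
  \sum_(a in H) sec_coef a a^-1 = 1.
Proof.
move=> secS; rewrite -[RHS]/(true%:R : F) -(eqxx (1%g : G)) -secS //.
apply: eq_bigr => a Ha.
rewrite (big_in_pred1 (P := fun b => (a * b == 1)%g) (i0 := a^-1%g)) ?groupV //.
  by rewrite /sec_coef mulgV.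
by move=> b; rewrite /= -eq_invg_mul eq_sym.
Qed.

End SectionCoefficients.

Lemma separable_order_neq0 :
  twisted_group_alg_separable H om phi -> (#|H|%:R : F) != 0.
Proof.
case=> sec [_ secS secL secR]; apply/eqP => H0.
have := sum_sec_coef secS.
rewrite (eq_bigr (fun _ => sec_coef sec 1 1)) => [|a Ha]; last first.
  by rewrite sec_coef_const ?groupV.
by rewrite sumr_const -mulr_natr H0 mulr0 => /eqP; rewrite eq_sym oner_eq0.
Qed.

Definition avg_section (x a b : G) : F :=
  if (a * b == x)%g then (#|H|%:R)^-1 / phi a b else 0.

Lemma avg_section_graded : sec_graded H avg_section.
Proof. by move=> x a b _ _ _; rewrite /avg_section => /negbTE ->. Qed.

Lemma avg_section_is_section :
  (#|H|%:R : F) != 0 -> sec_is_section H phi avg_section.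
Proof.
move=> H_neq0 x y Hx Hy.
transitivity (\sum_(a in H) (y == x)%:R / (#|H|%:R : F)).
  apply: eq_bigr => a Ha.
  rewrite (big_in_pred1 (P := fun b => (a * b == y)%g) (i0 := (a^-1 * y)%g)).
  - rewrite /avg_section mulKVg; case: eqP => _; last by rewrite !mul0r.
    by rewrite mul1r divfK // phi_neq0 // groupM ?groupV.
  - by rewrite groupM ?groupV.
  by move=> b; apply/eqP/eqP => [<-|->]; rewrite ?mulKg ?mulKVg.
by rewrite sumr_const -(mulr_natr ((y == x)%:R / _)) divfK // eq_sym.
Qed.

Lemma avg_section_left_linear : sec_left_linear H om phi avg_section.
Proof.
move=> h x a' b' Hh Hx Ha' Hb'.
rewrite (big_in_pred1_2 (P := fun a => (h * a == a')%g) (Q := pred1 b')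
  (i0 := (h^-1 * a')%g) (j0 := b')) ?groupM ?groupV //; last first.
  by move=> a; apply/eqP/eqP => [<-|->]; rewrite ?mulKg ?mulKVg.
have [a Ha ->] : exists2 a, a \in H & a' = (h * a)%g.
  by exists (h^-1 * a')%g; rewrite ?groupM ?groupV ?mulKVg.
rewrite mulKg /avg_section -mulgA (inj_eq (mulgI h)).
case: eqP => [<-|_]; last by rewrite !mulr0 !mul0r.
(* generalizing #|H|^-1 keeps [field] from requiring #|H| != 0 *)
rewrite twist_phiMr //; move: (#|H|%:R : F)^-1 => k; field.
by rewrite !phi_neq0 ?om_neq0 ?groupM.
Qed.

Lemma avg_section_right_linear : sec_right_linear H om phi avg_section.
Proof.
move=> x h a' b' Hx Hh Ha' Hb'.
rewrite (big_in_pred1_2 (P := pred1 a') (Q := fun b => (b * h == b')%g)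
  (i0 := a') (j0 := (b' * h^-1)%g)) ?groupM ?groupV //; last first.
  by move=> b; apply/eqP/eqP => [<-|->]; rewrite ?mulgK ?mulgKV.
have [b Hb ->] : exists2 b, b \in H & b' = (b * h)%g.
  by exists (b' * h^-1)%g; rewrite ?groupM ?groupV ?mulgKV.
rewrite mulgK /avg_section mulgA (inj_eq (mulIg h)).
case: eqP => [<-|_]; last by rewrite !mulr0 !mul0r.
rewrite twist_phiMl //; move: (#|H|%:R : F)^-1 => k; field.
by rewrite !phi_neq0 ?om_neq0 ?groupM.
Qed.

Lemma separable_iff_order_neq0 :
  twisted_group_alg_separable H om phi <-> (#|H|%:R : F) != 0.
Proof.
split; first exact: separable_order_neq0.
move=> H_neq0; exists avg_section; split.
- exact: avg_section_graded.
- exact: avg_section_is_section.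
- exact: avg_section_left_linear.
- exact: avg_section_right_linear.
Qed.

End TwistedGroupAlgebra.

Theorem lemma1p1p8 (F : closedFieldType) (p : nat) (G : finGroupType)
  (H : {group G}) (om : G -> G -> G -> F) (phi : G -> G -> F) :
  (p \in [pchar F])%R ->
  is_3cocycle om ->
  is_twist H om phi ->
  module_cat_separable H om phi <-> no_p_torsion p H.
Proof.
move=> pF [om_neq0 _] [phi_neq0 dphi].
rewrite (no_p_torsionP _ (pcharf_prime pF)) (dvdn_pcharf pF).
exact: separable_iff_order_neq0.
Qed.
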